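(* Let $n\ge 3$ and let $m,a,b,c$ be integers with $m\ge 0$, $a\ge1$, $b\ge 1$, $c\ge 1$ and $a+b+c=n$. Put $$V=(s_{a+b+1}s_{a+b+2}\cdots s_{n-1})\,(s_ns_{n-1}\cdots s_{a+b+1})\,(s_as_{a-1}\cdots s_2),$$ $$W=(s_{a+b+1}s_{a+b+2}\cdots s_{n-1})\,(s_ns_{n-1}\cdots s_{a+b+1})\,(s_1s_2\cdots s_{a+b-1})\,(s_{a+b}s_{a+b-1}\cdots s_2s_1).$$ Then $$((m+1)^a,m^b,(m+1)^c)=W^m V(\alpha_1).$$ In particular $((m+1)^a,m^b,(m+1)^c)$ is a positive real root.
   Context: Notation: $(x^a,y^b,z^c)$ denotes the vector in $\mathbb{Z}^n$ whose first $a$ entries equal $x$, next $b$ entries equal $y$ and last $c$ entries equal $z$. The simple roots $\alpha_1,\dots,\alpha_n$ are the standard basis vectors of $\mathbb{Z}^n$. For $1\le i\le n$ the simple reflection $s_i:\mathbb{Z}^n\to\mathbb{Z}^n$ is the linear map which changes only the $i$-th coordinate of $v=(v^1,\dots,v^n)$, replacing $v^i$ by $v^{i-1}+v^{i+1}-v^i$, with indices modulo $n$ in $\{1,\dots,n\}$. Products are compositions of maps (the rightmost factor acts first). Convention: an ascending product $s_js_{j+1}\cdots s_l$ with $l<j$ and a descending product $s_ls_{l-1}\cdots s_j$ with $l<j$ are both the identity map. A real root is a vector $s_{i_1}\cdots s_{i_j}(\alpha_k)$; it is positive if its entries are nonnegative. *)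

(* Vectors of Z^n are row vectors 'rV[int]_n; the paper's
   1-based coordinate i (1 <= i <= n) is the ordinal i-1. *)
From mathcomp Require Import all_boot all_order all_algebra.
Set Implicit Arguments. Unset Strict Implicit. Unset Printing Implicit Defensive.
Import Order.TTheory GRing.Theory Num.Theory.
Local Open Scope ring_scope.

Definition vget (n : nat) (v : 'rV[int]_n) (k : nat) : int :=
  match @insub nat (fun x => x < n)%N _ (k %% n)%N with
  | Some j => v 0 j
  | None => 0
  end.

(* simple reflection s_i (1-based i, 1 <= i <= n): replaces coordinate i by
   v^{i-1} + v^{i+1} - v^i, indices modulo n *)
Definition srefl (n : nat) (i : nat) (v : 'rV[int]_n) : 'rV[int]_n :=
  \row_(j < n) if (j : nat) == (i.-1 %% n)%N
               then vget v (i + n - 2)%N + vget v i - v 0 j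
               else v 0 j.

(* product of reflections listed left to right: [:: i1; ...; ik] acts as
   s_i1 \o ... \o s_ik (rightmost acts first) *)
Definition sprod (n : nat) (w : seq nat) (v : 'rV[int]_n) : 'rV[int]_n :=
  foldr (fun i u => srefl i u) v w.

(* s_j s_{j+1} ... s_l  (empty if l < j) *)
Definition asc (j l : nat) : seq nat := iota j (l.+1 - j).
(* s_l s_{l-1} ... s_j  (empty if l < j) *)
Definition desc (l j : nat) : seq nat := rev (iota j (l.+1 - j)).

Definition alpha (n k : nat) : 'rV[int]_n :=
  \row_(j < n) if (j : nat) == k.-1 then 1 else 0.

Definition real_root (n : nat) (v : 'rV[int]_n) : Prop :=
  exists (w : seq nat) (k : nat),
    (1 <= k <= n)%N /\ all (fun i => 1 <= i <= n)%N w /\ v = sprod w (alpha n k).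

Definition positive_root (n : nat) (v : 'rV[int]_n) : Prop :=
  real_root v /\ forall j, 0 <= v 0 j.

Definition blockvec (n a b : nat) (m : nat) : 'rV[int]_n :=
  \row_(j < n) if ((j < a) || (a + b <= j))%N then (m.+1)%:Z else m%:Z.

Definition Vword (n a b : nat) : seq nat :=
  asc (a + b + 1) (n - 1) ++ desc n (a + b + 1) ++ desc a 2.

Definition Wword (n a b : nat) : seq nat :=
  asc (a + b + 1) (n - 1) ++ desc n (a + b + 1) ++ asc 1 (a + b - 1)
      ++ desc (a + b) 1.

From mathcomp Require Import all_boot all_order all_algebra.
From mathcomp Require Import zify.
Set Implicit Arguments. Unset Strict Implicit. Unset Printing Implicit Defensive.
Local Open Scope ring_scope.

(* Call (P^a, Q^b, P^c) a plateau.  A descending product of consecutive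
   reflections shifts a block of coordinates one place to the left and an
   ascending one shifts it to the right, up to an additive correction read off
   the neighbours of the block; on plateaus this correction is 0 or P - Q.
   Following a plateau through the words, V sends alpha_1 = (1, 0^(n-1)) to
   (1^a, 0^b, 1^c) and W sends (P^a, Q^b, P^c) to ((2P-Q)^a, P^b, (2P-Q)^c),
   so W^m V(alpha_1) = ((m+1)^a, m^b, (m+1)^c), whose entries are nonnegative. *)

Lemma vget_lt n (v : 'rV[int]_n) q (Hq : (q < n)%N) : vget v q = v 0 (Ordinal Hq).
Proof.
rewrite /vget modn_small //; case: insubP => [j _ Hj|]; last by rewrite Hq.
by congr (v 0 _); apply: val_inj; rewrite /= Hj.
Qed.

Lemma vget_addn n (v : 'rV[int]_n) k : vget v (k + n) = vget v k.
Proof. by rewrite /vget modnDr. Qed.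

Lemma vget_n n (v : 'rV[int]_n) : vget v n = vget v 0.
Proof. by rewrite -[n in vget v n]add0n vget_addn. Qed.

Lemma eq_vget n (u v : 'rV[int]_n) :
  (forall q, (q < n)%N -> vget u q = vget v q) -> u = v.
Proof.
move=> Huv; apply/rowP => j; have := Huv j (ltn_ord j).
by rewrite !(vget_lt _ (ltn_ord j)); congr (_ = _); congr (_ _ _); apply: val_inj.
Qed.

Lemma sprod_cat n s1 s2 (v : 'rV[int]_n) :
  sprod (s1 ++ s2) v = sprod s1 (sprod s2 v).
Proof. by rewrite /sprod foldr_cat. Qed.

Lemma sprod_iter n (w u : seq nat) m (v : 'rV[int]_n) :
  sprod (flatten (nseq m w) ++ u) v = iter m (sprod w) (sprod u v).
Proof. by elim: m => //= m IH; rewrite -catA sprod_cat IH. Qed.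

Ltac by_cases_on_ifs := repeat (case: ifP => ? /=); lia.

(* Positions are 0-based, so [s_(p+1)] changes position [p]; its cyclic left
   neighbour is written [p + n - 1] to avoid truncated subtraction. *)
Lemma vget_srefl n p (v : 'rV[int]_n) q : (p < n)%N -> (q < n)%N ->
  vget (srefl p.+1 v) q =
  if q == p then vget v (p + n - 1) + vget v p.+1 - vget v p else vget v q.
Proof.
move=> Hp Hq; rewrite !(vget_lt _ Hq) mxE /= (modn_small Hp).
case: eqP => // Eqp; rewrite -(vget_lt v Hq) Eqp.
by have -> : (p.+1 + n - 2 = p + n - 1)%N by lia.
Qed.

(* [p + d < n || 0 < p] excludes the full cycle [s_n ... s_1], whose first
   reflection would already have altered the neighbour read by the last one. *)
Lemma vget_sprod_desc n p d (v : 'rV[int]_n) q :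
  (p + d <= n)%N -> (p + d < n)%N || (0 < p)%N -> (q < n)%N ->
  vget (sprod (rev (iota p.+1 d)) v) q =
  if (p <= q < p + d)%N then vget v q.+1 + vget v (p + n - 1) - vget v p
  else vget v q.
Proof.
elim: d q => [|d IH] q Hd Hcyc Hq; first by rewrite addn0; by_cases_on_ifs.
have IHd q' : (q' < n)%N -> _ := IH q' ltac:(lia) ltac:(lia).
rewrite -[d.+1]addn1 iotaD rev_cat /= addSn vget_srefl //; last by lia.
set w := sprod _ v.
case: eqP => [->|Hne]; last by rewrite IHd //; by_cases_on_ifs.
have Ew0 : vget w (p + d) = vget v (p + d) by rewrite IHd //; by_cases_on_ifs.
have Ew1 : vget w (p + d).+1 = vget v (p + d).+1.
  have [Hlt|Hn] := ltnP (p + d).+1 n.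
    by rewrite IHd //; by_cases_on_ifs.
  have -> : (p + d).+1 = n by lia.
  by rewrite !vget_n IHd; [by_cases_on_ifs | lia].
have Ewl : vget w (p + d + n - 1) = vget v (p + d) + vget v (p + n - 1) - vget v p.
  have [d0|Hd0] := posnP d; first by rewrite /w d0 addn0 /=; lia.
  have -> : (p + d + n - 1 = (p + d - 1) + n)%N by lia.
  rewrite vget_addn IHd; last by lia.
  by case: ifP => [_|]; [have -> : (p + d - 1).+1 = (p + d)%N by lia | lia].
rewrite Ew0 Ew1 Ewl; by_cases_on_ifs.
Qed.

Lemma vget_sprod_asc n p d (v : 'rV[int]_n) q :
  (p + d < n)%N -> (q < n)%N ->
  vget (sprod (iota p.+1 d) v) q =
  if (p <= q < p + d)%N then vget v (q + n - 1) + vget v (p + d) - vget v (p + d - 1)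
  else vget v q.
Proof.
elim: d p q => [|d IH] p q Hd Hq; first by rewrite addn0; by_cases_on_ifs.
have IHd := IH p.+1 _ ltac:(lia).
rewrite [sprod _ v]/= vget_srefl //; last by lia.
set w := sprod _ v.
case: eqP => [->|Hne]; last first.
  rewrite IHd // addSnnS; by_cases_on_ifs.
have Ew0 : vget w p = vget v p by rewrite IHd //; by_cases_on_ifs.
have Ewl : vget w (p + n - 1) = vget v (p + n - 1).
  have [->|Hp] := posnP p; first by rewrite IHd; [by_cases_on_ifs | lia].
  have -> : (p + n - 1 = p.-1 + n)%N by lia.
  by rewrite !vget_addn IHd; [by_cases_on_ifs | lia].
have Ewr : vget w p.+1 = vget v p + vget v (p + d.+1) - vget v (p + d).
  have [d0|Hd0] := posnP d; first by rewrite /w d0 /= addn0 addn1; lia.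
  rewrite IHd; last by lia.
  case: ifP => [_|]; last by lia.
  have -> : (p.+1 + n - 1 = p + n)%N by lia.
  by rewrite vget_addn addSnnS (_ : (p + d.+1 - 1 = p + d)%N); last lia.
rewrite Ew0 Ewl Ewr (_ : (p + d.+1 - 1 = p + d)%N); last by lia.
by_cases_on_ifs.
Qed.

Definition plateau (n a b : nat) (P Q : int) : 'rV[int]_n :=
  \row_(j < n) if ((j < a) || (a + b <= j))%N then P else Q.

Lemma vget_plateau n a b P Q q : (q < n)%N ->
  vget (plateau n a b P Q) q = if ((q < a) || (a + b <= q))%N then P else Q.
Proof. by move=> Hq; rewrite (vget_lt _ Hq) mxE. Qed.

Lemma alpha1_plateau n : (0 < n)%N -> alpha n 1 = plateau n 1 (n - 1) 1 0.
Proof.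
by move=> Hn; apply/rowP => j; have := ltn_ord j; rewrite !mxE; by_cases_on_ifs.
Qed.

Lemma blockvec_plateau n a b m : blockvec n a b m = plateau n a b m.+1 m.
Proof. by []. Qed.

Section PlateauShifts.
Variables (n : nat) (P Q : int).

Lemma desc_init_plateau a : (0 < a < n)%N ->
  sprod (desc a 2) (plateau n 1 (n - 1) P Q) = plateau n a (n - a) P Q.
Proof.
move=> Ha; apply: eq_vget => q Hq.
rewrite /desc (_ : a.+1 - 2 = a - 1)%N; last by lia.
rewrite vget_sprod_desc; [|lia|lia|lia].
rewrite (_ : 1 + n - 1 = n)%N; last by lia.
rewrite vget_n; case: ifP => Hrange; rewrite !vget_plateau; by_cases_on_ifs.
Qed.

Lemma desc_tail_plateau a b : (0 < a)%N -> (0 < b)%N -> (a + b < n)%N ->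
  sprod (desc n (a + b + 1)) (plateau n a (n - a) P Q) = plateau n a (n - a - 1) P Q.
Proof.
move=> Ha Hb Hab; apply: eq_vget => q Hq.
rewrite /desc addn1 subSS vget_sprod_desc; [|lia|lia|lia].
rewrite (_ : a + b + n - 1 = (a + b - 1) + n)%N; last by lia.
rewrite vget_addn; case: ifP => Hrange; last by rewrite !vget_plateau; by_cases_on_ifs.
have [Hlt|Hqn] := ltnP q.+1 n; first by rewrite !vget_plateau; by_cases_on_ifs.
rewrite (_ : q.+1 = n); last by lia.
by rewrite vget_n !vget_plateau; by_cases_on_ifs.
Qed.

Lemma asc_tail_plateau a b : (0 < b)%N -> (a + b < n)%N ->
  sprod (asc (a + b + 1) (n - 1)) (plateau n a (n - a - 1) P Q) = plateau n a b P Q.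
Proof.
move=> Hb Hab; apply: eq_vget => q Hq.
rewrite /asc (_ : (n - 1).+1 - (a + b + 1) = n - 1 - (a + b))%N; last by lia.
rewrite addn1 vget_sprod_asc; [|lia|lia].
case: ifP => Hrange; last by rewrite !vget_plateau; by_cases_on_ifs.
rewrite (_ : q + n - 1 = q.-1 + n)%N; last by lia.
by rewrite vget_addn !vget_plateau; by_cases_on_ifs.
Qed.

Lemma desc_head_plateau a b : (0 < a)%N -> (a + b < n)%N ->
  sprod (desc (a + b) 1) (plateau n a b P Q) = plateau n a.-1 b P Q.
Proof.
move=> Ha Hab; apply: eq_vget => q Hq.
rewrite /desc subn1 vget_sprod_desc; [|lia|lia|lia].
by rewrite add0n; case: ifP => Hrange; rewrite !vget_plateau; by_cases_on_ifs.
Qed.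

Lemma asc_head_plateau a b : (0 < a)%N -> (0 < b)%N -> (a + b < n)%N ->
  sprod (asc 1 (a + b - 1)) (plateau n a.-1 b P Q) = plateau n a (n - a) (2 * P - Q) P.
Proof.
move=> Ha Hb Hab; apply: eq_vget => q Hq.
rewrite /asc subn1 vget_sprod_asc; [|lia|lia].
rewrite !add0n; case: ifP => Hrange; last by rewrite !vget_plateau; by_cases_on_ifs.
have [->|Hq0] := posnP q; first by rewrite add0n !vget_plateau; by_cases_on_ifs.
rewrite (_ : q + n - 1 = q.-1 + n)%N; last by lia.
by rewrite vget_addn !vget_plateau; by_cases_on_ifs.
Qed.

End PlateauShifts.

Section Words.
Variables (n a b : nat).
Hypotheses (Ha : (0 < a)%N) (Hb : (0 < b)%N) (Hab : (a + b < n)%N).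

Lemma sprod_Vword_alpha1 : sprod (Vword n a b) (alpha n 1) = plateau n a b 1 0.
Proof.
rewrite /Vword !sprod_cat alpha1_plateau; last by lia.
rewrite desc_init_plateau ?desc_tail_plateau ?asc_tail_plateau //; lia.
Qed.

Lemma sprod_Wword_plateau P Q :
  sprod (Wword n a b) (plateau n a b P Q) = plateau n a b (2 * P - Q) P.
Proof.
rewrite /Wword !sprod_cat desc_head_plateau ?asc_head_plateau //.
by rewrite desc_tail_plateau ?asc_tail_plateau.
Qed.

Lemma iter_Wword_Vword m :
  iter m (sprod (Wword n a b)) (sprod (Vword n a b) (alpha n 1)) = plateau n a b m.+1 m.
Proof.
elim: m => [|m IH] /=; first exact: sprod_Vword_alpha1.
by rewrite IH sprod_Wword_plateau; congr plateau; lia.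
Qed.

End Words.

Lemma all_flatten_nseq (T : Type) (p : pred T) m s :
  all p s -> all p (flatten (nseq m s)).
Proof. by move=> ps; elim: m => //= m IH; rewrite all_cat ps. Qed.

Lemma all_asc_range n j l : (0 < j)%N -> (l <= n)%N ->
  all (fun i => 1 <= i <= n)%N (asc j l).
Proof. by move=> Hj Hl; apply/allP => i; rewrite mem_iota; lia. Qed.

Lemma all_desc_range n l j : (0 < j)%N -> (l <= n)%N ->
  all (fun i => 1 <= i <= n)%N (desc l j).
Proof. by rewrite /desc all_rev; apply: all_asc_range. Qed.

Theorem theorem4p1 (n m a b c : nat) :
  (3 <= n)%N -> (1 <= a)%N -> (1 <= b)%N -> (1 <= c)%N -> (a + b + c = n)%N ->
  blockvec n a b m = iter m (sprod (Wword n a b)) (sprod (Vword n a b) (alpha n 1))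
  /\ positive_root (blockvec n a b m).
Proof.
move=> _ Ha Hb Hc Hn; have Hab : (a + b < n)%N by lia.
have Hblock : blockvec n a b m =
    iter m (sprod (Wword n a b)) (sprod (Vword n a b) (alpha n 1)).
  by rewrite blockvec_plateau iter_Wword_Vword.
split=> //; split; last by move=> j; rewrite mxE; case: ifP.
exists (flatten (nseq m (Wword n a b)) ++ Vword n a b), 1%N.
split; first by lia.
split; last by rewrite sprod_iter.
rewrite all_cat all_flatten_nseq /Wword /Vword ?all_cat
  ?all_asc_range ?all_desc_range //; lia.
Qed.
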